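(* Let $X_1, \dots, X_n$ be nonnegative random variables on a probability space $(\Omega, \mathcal{F}, \mathbb{P})$, let $\emptyset \neq \mathcal{S} \subseteq \{1, \dots, n\}$, and let $\mathbf{u} = (u_\lambda : \emptyset \neq \lambda \subseteq \mathcal{S})$ be real thresholds satisfying $u_\mu \geq u_\lambda$ for all nonempty $\mu \subsetneq \lambda \subseteq \mathcal{S}$. Then the collection $\{ B_\mu(\mathbf{u}) : \mu \subseteq \mathcal{S} \}$ forms a partition of $\Omega$ (the events are pairwise disjoint and their union is $\Omega$).
   Context: For $\mu \subseteq \mathcal{S}$ and $u \in \mathbb{R}$, $A_\mu(u) := \bigcap_{i \in \mu} \{X_i > u\}$, with $A_\emptyset(u) := \Omega$. For $\mu \subseteq \mathcal{S}$ (including $\mu = \emptyset$), $B_\mu(\mathbf{u}) := A_\mu(u_\mu) \cap \bigcap_{\mu \subsetneq \lambda \subseteq \mathcal{S}} \overline{A_\lambda(u_\lambda)}$, where $\overline{E}$ denotes the complement of an event $E$; in particular $B_\emptyset(\mathbf{u}) = \bigcap_{\emptyset \neq \lambda \subseteq \mathcal{S}} \overline{A_\lambda(u_\lambda)}$. *)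

From HB Require Import structures.
From mathcomp Require Import all_boot all_order all_algebra.
From mathcomp Require Import all_classical all_reals all_analysis.
Set Implicit Arguments. Unset Strict Implicit. Unset Printing Implicit Defensive.
Import Order.TTheory GRing.Theory Num.Theory.
Local Open Scope classical_set_scope.
Local Open Scope ring_scope.

Definition A_ev (T : Type) (R : realType) (n : nat) (X : 'I_n -> T -> R)
  (mu : {set 'I_n}) (t : R) : set T :=
  [set w | forall i, i \in mu -> t < X i w].

Definition B_ev (T : Type) (R : realType) (n : nat) (X : 'I_n -> T -> R)
  (S : {set 'I_n}) (u : {set 'I_n} -> R) (mu : {set 'I_n}) : set T :=
  A_ev X mu (u mu) `&`
  \bigcap_(lam in [set lam : {set 'I_n} | (mu \proper lam) && (lam \subset S)])
     ~` A_ev X lam (u lam).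

From HB Require Import structures.
From mathcomp Require Import all_boot all_order all_algebra.
From mathcomp Require Import all_classical all_reals all_analysis.
Set Implicit Arguments. Unset Strict Implicit. Unset Printing Implicit Defensive.
Import Order.TTheory GRing.Theory Num.Theory.
Local Open Scope classical_set_scope.
Local Open Scope ring_scope.

(* A maximal mu among the subsets of S with w in A_mu(u_mu) exists
   (the empty set is one of them) and w lies in B_mu, which gives the covering.
   If w is in B_mu and B_nu with mu != nu, then mu and nu are incomparable,
   hence both nonempty, so u_(mu :|: nu) <= u_mu, u_nu puts w in
   A_(mu :|: nu), contradicting w in B_mu. *)

Section Partition.

Variables (T : Type) (R : realType) (n : nat) (X : 'I_n -> T -> R).
Variables (S : {set 'I_n}) (u : {set 'I_n} -> R).

Lemma B_evP (mu : {set 'I_n}) w :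
  B_ev X S u mu w <-> A_ev X mu (u mu) w /\
    forall lam : {set 'I_n}, mu \proper lam -> lam \subset S -> ~ A_ev X lam (u lam) w.
Proof.
split=> [[Aw Bw]|[Aw Bw]]; split=> // lam.
  by move=> mu_lam lamS; apply: Bw; rewrite /= mu_lam lamS.
by case/andP; apply: Bw.
Qed.

Lemma A_evU (mu nu : {set 'I_n}) t :
  A_ev X (mu :|: nu) t = A_ev X mu t `&` A_ev X nu t.
Proof.
apply/seteqP; split=> w.
  by move=> At; split=> i i_in; apply: At; rewrite finset.in_setU i_in ?orbT.
by case=> Amu Anu i; rewrite finset.in_setU => /orP[/Amu|/Anu].
Qed.

Definition A_within w :=
  [pred mu : {set 'I_n} | (mu \subset S) && `[< A_ev X mu (u mu) w >]].

Lemma B_ev_maxset w (mu : {set 'I_n}) : maxset (A_within w) mu -> B_ev X S u mu w.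
Proof.
case/maxsetP=> /andP[_ /asboolP Aw] max_mu.
apply/B_evP; split=> // lam mu_lam lamS Alam.
have lam_in : A_within w lam by rewrite /= lamS; apply/asboolP.
have lam_mu := max_mu lam lam_in (proper_sub mu_lam).
by rewrite lam_mu properE andbN in mu_lam.
Qed.

Lemma B_ev_cover :
  \bigcup_(mu in [set mu : {set 'I_n} | mu \subset S]) B_ev X S u mu = setT.
Proof.
apply/seteqP; split=> // w _.
have set0_in : A_within w finset.set0.
  by rewrite /= finset.sub0set; apply/asboolP => i; rewrite finset.in_set0.
have [mu max_mu _] := maxset_exists set0_in.
by exists mu; [case/maxsetP: max_mu => /andP[] | exact: B_ev_maxset].
Qed.

Hypothesis u_antitone : forall mu lam : {set 'I_n},
  mu != finset.set0 -> mu \proper lam -> lam \subset S -> u lam <= u mu.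

Lemma A_ev_join (mu nu : {set 'I_n}) : ~~ (mu \subset nu) -> ~~ (nu \subset mu) ->
    mu :|: nu \subset S ->
  A_ev X mu (u mu) `&` A_ev X nu (u nu) `<=` A_ev X (mu :|: nu) (u (mu :|: nu)).
Proof.
move=> mu_nu nu_mu joinS w [Amu Anu]; rewrite A_evU.
have mu0 : mu != finset.set0 by apply: contraNneq mu_nu => ->; apply: finset.sub0set.
have nu0 : nu != finset.set0 by apply: contraNneq nu_mu => ->; apply: finset.sub0set.
split=> i i_in.
  exact: le_lt_trans (u_antitone mu0 (properUl nu_mu) joinS) (Amu i i_in).
exact: le_lt_trans (u_antitone nu0 (properUr mu_nu) joinS) (Anu i i_in).
Qed.

Lemma B_ev_disjoint (mu nu : {set 'I_n}) :
    mu \subset S -> nu \subset S -> mu != nu ->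
  B_ev X S u mu `&` B_ev X S u nu = set0.
Proof.
move=> muS nuS neq_mu_nu; apply/seteqP; split=> // w.
case=> /B_evP[Amu Bmu] /B_evP[Anu Bnu].
have [nu_mu|nnu_mu] := boolP (nu \subset mu).
  by apply: (Bnu mu _ muS Amu); rewrite finset.properEneq eq_sym neq_mu_nu.
have [mu_nu|nmu_nu] := boolP (mu \subset nu).
  by apply: (Bmu nu _ nuS Anu); rewrite finset.properEneq neq_mu_nu.
have joinS : mu :|: nu \subset S by rewrite finset.subUset muS nuS.
have Ajoin := A_ev_join nmu_nu nnu_mu joinS (conj Amu Anu).
by case: (Bmu _ (properUl nnu_mu) joinS Ajoin).
Qed.

End Partition.

Theorem lemma16 (d : measure_display) (T : measurableType d) (R : realType)
  (P : probability T R) (n : nat) (X : 'I_n -> T -> R)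
  (hXmeas : forall i, measurable_fun setT (X i))
  (hXnn : forall i w, 0 <= X i w)
  (S : {set 'I_n}) (hS : S != finset.set0)
  (u : {set 'I_n} -> R)
  (hu : forall mu lam : {set 'I_n}, mu != finset.set0 -> mu \proper lam ->
        lam \subset S -> u lam <= u mu) :
  (forall mu nu : {set 'I_n}, mu \subset S -> nu \subset S -> mu != nu ->
      B_ev X S u mu `&` B_ev X S u nu = set0) /\
  \bigcup_(mu in [set mu : {set 'I_n} | mu \subset S]) B_ev X S u mu = setT.
Proof.
split=> [mu nu|]; [apply: (B_ev_disjoint X hu) | exact: B_ev_cover].
Qed.
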